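(* Let $n\ge1$, $N\ge3$, $m=n+N$, let $u>0$ solve $\partial_tu=\Delta_xu$ on $\mathbb{R}^n\times(0,\infty)$ with $u=t^{-n/2}e^{-f}$, fix $0<\tau_1<\tau_2$, and assume $f$ and all of its partial derivatives in $x$ and $t$ are bounded on $\mathbb{R}^n\times[\tau_1,\tau_2]$. With $v,b,\psi$ as in the context, there is a constant $C$ depending only on $n$, $f$ and $\tau_2$ such that at every $(x,y)$ with $\frac{|y|^2}{2N}\in[\tau_1,\tau_2]$, \[ |\psi|,\ |\nabla_x\psi|,\ |\nabla_y b|\le C\qquad\text{and}\qquad |\nabla_y\psi|,\ |\nabla_x b|\le C\,N^{-1/2}. \]
   Context: $\mathbb{R}^m=\mathbb{R}^n\times\mathbb{R}^N$, points $(x,y)$, $r=|y|$; $\nabla_x,\nabla_y$ are the gradients in the $x$ and $y$ variables and $\Delta$ is the Euclidean Laplacian on $\mathbb{R}^m$. $v(x,y)=r^{2-m}\exp(-f(x,\tfrac{r^2}{2N}))$, $b=v^{1/(2-m)}$, $\psi=b^m\Delta v$. *)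

From HB Require Import structures.
From mathcomp Require Import all_boot all_order all_algebra.
From mathcomp Require Import all_classical all_reals all_analysis.
Set Implicit Arguments. Unset Strict Implicit. Unset Printing Implicit Defensive.
Import Order.TTheory GRing.Theory Num.Theory.
Import numFieldNormedType.Exports.
Local Open Scope ring_scope.

Section Defs.
Variable R : realType.

(* Euclidean norm on R^k (the library norm on matrices is the sup norm). *)
Definition enorm (k : nat) (y : 'rV[R]_k) : R :=
  Num.sqrt (\sum_(j < k) y ord0 j ^+ 2).

Definition pdx (n : nat) (F : 'rV[R]_n -> R -> R) (i : 'I_n) : 'rV[R]_n -> R -> R :=
  fun x t => derive (fun x' => F x' t) x (delta_mx ord0 i).
Definition pdt (n : nat) (F : 'rV[R]_n -> R -> R) : 'rV[R]_n -> R -> R :=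
  fun x t => derive (fun s => F x s) t 1.

Definition pdir (n : nat) (d : option 'I_n) (F : 'rV[R]_n -> R -> R) :=
  match d with Some i => pdx F i | None => pdt F end.

Definition derivable_dir (n : nat) (d : option 'I_n) (F : 'rV[R]_n -> R -> R)
    (x : 'rV[R]_n) (t : R) : Prop :=
  match d with
  | Some i => derivable (fun x' => F x' t) x (delta_mx ord0 i)
  | None => derivable (fun s => F x s) t 1
  end.

(* iterated partial derivatives (applied right to left) *)
Fixpoint pdn (n : nat) (ds : seq (option 'I_n)) (F : 'rV[R]_n -> R -> R) :=
  match ds with [::] => F | d :: ds' => pdir d (pdn ds' F) end.

Definition smooth_pos (n : nat) (f : 'rV[R]_n -> R -> R) : Prop :=
  forall (ds : seq (option 'I_n)) (x : 'rV[R]_n) (t : R), 0 < t ->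
    (forall d, derivable_dir d (pdn ds f) x t) /\
    {for (x, t), continuous (fun p : 'rV[R]_n * R => pdn ds f p.1 p.2)}.

Definition ufun (n : nat) (f : 'rV[R]_n -> R -> R) : 'rV[R]_n -> R -> R :=
  fun x t => t `^ (- (n%:R / 2)) * expR (- f x t).

Definition heat_eq (n : nat) (f : 'rV[R]_n -> R -> R) : Prop :=
  forall x t, 0 < t ->
    pdt (ufun f) x t = \sum_(i < n) pdx (pdx (ufun f) i) i x t.

Definition bounded_derivs (n : nat) (f : 'rV[R]_n -> R -> R) (tau1 tau2 : R) : Prop :=
  forall ds : seq (option 'I_n), exists K : R,
    forall x t, tau1 <= t <= tau2 -> `|pdn ds f x t| <= K.

Definition dX (n N : nat) (G : 'rV[R]_n -> 'rV[R]_N -> R) (i : 'I_n) :=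
  fun x y => derive (fun x' => G x' y) x (delta_mx ord0 i).
Definition dY (n N : nat) (G : 'rV[R]_n -> 'rV[R]_N -> R) (j : 'I_N) :=
  fun x y => derive (fun y' => G x y') y (delta_mx ord0 j).

Definition lap (n N : nat) (G : 'rV[R]_n -> 'rV[R]_N -> R) :=
  fun x y => \sum_(i < n) dX (dX G i) i x y + \sum_(j < N) dY (dY G j) j x y.

Definition gradX_norm (n N : nat) (G : 'rV[R]_n -> 'rV[R]_N -> R) x y : R :=
  Num.sqrt (\sum_(i < n) dX G i x y ^+ 2).
Definition gradY_norm (n N : nat) (G : 'rV[R]_n -> 'rV[R]_N -> R) x y : R :=
  Num.sqrt (\sum_(j < N) dY G j x y ^+ 2).

Definition vfun (n N : nat) (f : 'rV[R]_n -> R -> R) (x : 'rV[R]_n) (y : 'rV[R]_N) : R :=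
  (enorm y) ^- (n + N - 2)%N * expR (- f x (enorm y ^+ 2 / (2 * N%:R))).

Definition bfun (n N : nat) (f : 'rV[R]_n -> R -> R) (x : 'rV[R]_n) (y : 'rV[R]_N) : R :=
  @vfun n N f x y `^ ((2 - (n + N)%:R)^-1).

Definition psifun (n N : nat) (f : 'rV[R]_n -> R -> R) (x : 'rV[R]_n) (y : 'rV[R]_N) : R :=
  @bfun n N f x y ^+ (n + N) * lap (@vfun n N f) x y.

End Defs.

(* Write s = |y|^2/(2N) and k = n + N - 2.  Then v = (2Ns)^(-k/2) e^(-f(x,s)) and
   b = (2Ns)^(1/2) e^(f(x,s)/k) depend on y only through s, and for a profile g(s) one has
   Delta_y g = g' + (2s/N) g'' and |grad_y g| = |g'| sqrt(2s/N).  The heat equation for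
   u = t^(-n/2) e^(-f) reads |grad_x f|^2 - Delta_x f = -n/(2t) - d_t f, which evaluates
   Delta_x v.  As b^m v = 2Ns e^(2f/k), this yields the closed form
     psi = e^(2f/k) (4(n-2) s d_t f + 4 s^2 ((d_t f)^2 - d_t^2 f) + n(n-2)),
   and similarly |grad_y b| = e^(f/k) |1 + 2s d_t f / k| and
   |grad_x b| = sqrt(2s) (N/k) e^(f/k) |grad_x f| / sqrt N.  All these, and the derivatives
   of psi, are polynomials in s, 1/k <= 1, N/k <= 3, e^(f/k) and derivatives of f, hence
   bounded uniformly in N for s in [tau1, tau2]; |grad_y psi| and |grad_x b| keep the
   factor 1/sqrt N. *)

From HB Require Import structures.
From mathcomp Require Import all_boot all_order all_algebra.
From mathcomp Require Import all_classical all_reals all_analysis.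
From mathcomp Require Import ring lra zify.
Set Implicit Arguments. Unset Strict Implicit. Unset Printing Implicit Defensive.
Import Order.TTheory GRing.Theory Num.Theory.
Import numFieldNormedType.Exports.
Local Open Scope ring_scope.

Section PointwiseDerive.
Variables (R : realType) (V : normedModType R).
Implicit Types (F G : V -> R) (x v : V).

Lemma derive_line F x v : 'D_v F x = 'D_1 (fun h : R => F (h *: v + x)) 0.
Proof.
rewrite /derive; set g1 := fun h => h^-1 *: _; set g2 := fun h => h^-1 *: _.
suff -> : g1 = g2 by [].
by rewrite funeqE /g1 /g2 => h /=; rewrite addr0 scale0r add0r [_%:A]mulr1.
Qed.

Lemma is_derive_val F x v d : is_derive x v F d -> 'D_v F x = d.
Proof. by case. Qed.

Lemma is_derive_lineP F x v (d : R) :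
  is_derive x v F d <-> is_derive (0 : R) 1 (fun h : R => F (h *: v + x)) d.
Proof.
split=> -[dF dFE]; split.
- by move: dF => /derivable1P.
- by rewrite -derive_line.
- exact/derivable1P.
- by rewrite derive_line.
Qed.

Lemma is_derive_comp_real (g : R -> R) F x v dF dg :
  is_derive x v F dF -> is_derive (F x) 1 g dg ->
  is_derive x v (fun z => g (F z)) (dg * dF).
Proof.
move=> /is_derive_lineP dF' dg'; apply/is_derive_lineP.
have Fx : F (0 *: v + x) = F x by rewrite scale0r add0r.
rewrite -Fx in dg'.
exact: is_derive1_comp dg' dF'.
Qed.

Lemma is_derive_cst_fun (c : R) x v : is_derive x v (fun _ : V => c) 0.
Proof. exact: is_derive_cst. Qed.

Lemma is_deriveM_fun F G x v dF dG : is_derive x v F dF -> is_derive x v G dG ->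
  is_derive x v (fun z => F z * G z) (F x * dG + G x * dF).
Proof. exact: is_deriveM. Qed.

Lemma is_deriveD_fun F G x v dF dG : is_derive x v F dF -> is_derive x v G dG ->
  is_derive x v (fun z => F z + G z) (dF + dG).
Proof. exact: is_deriveD. Qed.

Lemma is_deriveN_fun F x v dF : is_derive x v F dF -> is_derive x v (fun z => - F z) (- dF).
Proof. exact: is_deriveN. Qed.

Lemma is_deriveX_fun F x v dF k : is_derive x v F dF ->
  is_derive x v (fun z => F z ^+ k) (k%:R * F x ^+ k.-1 * dF).
Proof. move=> dF'; have := is_deriveX k dF'; by rewrite -exprfctE. Qed.

Lemma is_deriveV_fun F x v dF : F x != 0 -> is_derive x v F dF ->
  is_derive x v (fun z => (F z)^-1) (- (F x) ^- 2 * dF).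
Proof. by move=> Fx0 [dF' dFE]; split; [exact: derivableV | rewrite deriveV // dFE]. Qed.

Lemma is_derive_sum_fun k (h : 'I_k -> V -> R) x v (dh : 'I_k -> R) :
  (forall i, is_derive x v (h i) (dh i)) ->
  is_derive x v (fun z => \sum_(i < k) h i z) (\sum_(i < k) dh i).
Proof. by move=> dh'; have := is_derive_sum dh'; rewrite -fct_sumE. Qed.

End PointwiseDerive.

Lemma is_derive_coord (R : realType) (N : nat) (y v : 'rV[R]_N) l :
  is_derive y v (fun z : 'rV[R]_N => z ord0 l) (v ord0 l).
Proof.
apply/is_derive_lineP.
have -> : (fun h : R => (h *: v + y) ord0 l) = (fun h => v ord0 l * h + y ord0 l).
  by apply/funext => h; rewrite !mxE mulrC.
apply: is_derive_eq (is_deriveD_fun (is_deriveM_fun (is_derive_cst_fun _ _ _)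
  (is_derive_id _ _)) (is_derive_cst_fun _ _ _)) _.
by rewrite mulr1 mulr0 !addr0.
Qed.

Ltac derive_tac := lazymatch goal with
 | |- is_derive _ _ (fun _ => ?c) _ => exact: is_derive_cst_fun
 | |- is_derive _ _ (fun z => z) _ => exact: is_derive_id
 | |- is_derive _ _ (fun z => _ * _) _ => apply: is_deriveM_fun; derive_tac
 | |- is_derive _ _ (fun z => _ + _) _ => apply: is_deriveD_fun; derive_tac
 | |- is_derive _ _ (fun z => - _) _ => apply: is_deriveN_fun; derive_tac
 | |- is_derive _ _ (fun z => _ ^+ _) _ => apply: is_deriveX_fun; derive_tac
 | |- is_derive _ _ (fun z => \sum_(i < _) _) _ =>
     apply: is_derive_sum_fun => ?; derive_tac
 | |- is_derive _ _ (fun z => fun_of_matrix z ord0 _) _ => exact: is_derive_coord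
 | |- is_derive _ _ (fun z => expR _) _ =>
     apply: is_derive_comp_real (is_derive_expR _); derive_tac
 | _ => eassumption
 end.

(* [is_derive] is a type class: instance search may solve premises on its own and return
   derivatives written with [*:], which are unfolded to products before [ring]/[field]. *)
Ltac derive_eq := lazymatch goal with
  | |- is_derive ?x ?v ?F ?d0 =>
      let T := type of d0 in let d := fresh "d" in let D := fresh "D" in
      evar (d : T);
      assert (D : is_derive x v F d) by derive_tac;
      apply: is_derive_eq D _; rewrite {}/d /= -?[_ *: _]/(_ * _)
  end.

Lemma sqr_enorm (R : realType) (N : nat) (y : 'rV[R]_N) :
  enorm y ^+ 2 = \sum_(l < N) y ord0 l ^+ 2.
Proof. by rewrite /enorm sqr_sqrtr // sumr_ge0 // => l _; rewrite sqr_ge0. Qed.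

Section HeatTime.
Variables (R : realType) (N : nat).
Hypothesis N_gt0 : (0 < N)%N.

Local Notation ej j := (delta_mx ord0 j : 'rV[R]_N).

Definition htime (y : 'rV[R]_N) : R := enorm y ^+ 2 / (2 * N%:R).

Let N_neq0 : N%:R != 0 :> R. Proof. by rewrite pnatr_eq0 -lt0n. Qed.

Lemma sum_sqr_coord (y : 'rV[R]_N) : \sum_(l < N) y ord0 l ^+ 2 = 2 * N%:R * htime y.
Proof. by rewrite -sqr_enorm /htime; field. Qed.

Lemma htimeE : htime = fun y => \sum_(l < N) (2 * N%:R)^-1 * y ord0 l ^+ 2.
Proof.
by apply/funext => y; rewrite -mulr_sumr -sqr_enorm /htime mulrC.
Qed.

Lemma is_derive_htime (y : 'rV[R]_N) j : is_derive y (ej j) htime (y ord0 j / N%:R).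
Proof.
rewrite htimeE; derive_eq.
rewrite (bigD1 j) //= big1 => [|l /negbTE lj]; last by rewrite mxE lj andbF !mulr0 addr0.
by rewrite mxE !eqxx /=; field.
Qed.

Lemma htime_near_gt0 (y : 'rV[R]_N) : 0 < htime y -> \forall z \near y, 0 < htime z.
Proof.
have htime_cont : {for y, continuous htime}.
  apply: differentiable_continuous; rewrite htimeE.
  have -> : (fun z : 'rV[R]_N => \sum_(l < N) (2 * N%:R)^-1 * z ord0 l ^+ 2) =
      \sum_(l < N) (cst (2 * N%:R)^-1 * (fun z : 'rV[R]_N => z ord0 l) ^+ 2).
    by apply/funext => z; rewrite fct_sumE; apply: eq_bigr => l _; rewrite /= exprfctE.
  apply: differentiable_sum => l.
  exact/differentiableM/differentiableX/differentiable_coord.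
exact: (cvgr_gt _ htime_cont).
Qed.

Lemma laplacian_radial (g g' g'' : R -> R) (y : 'rV[R]_N) : 0 < htime y ->
  (forall s : R, 0 < s -> is_derive s 1 g (g' s)) ->
  is_derive (htime y) 1 g' (g'' (htime y)) ->
  \sum_(j < N) 'D_(ej j) (fun z => 'D_(ej j) (fun w => g (htime w)) z) y =
  g' (htime y) + 2 * htime y / N%:R * g'' (htime y).
Proof.
move=> s_gt0 dg dg'.
have inner j : {near y, (fun z => 'D_(ej j) (fun w => g (htime w)) z) =1
                        (fun z => g' (htime z) * (z ord0 j / N%:R))}.
  apply: filterS (htime_near_gt0 s_gt0) => z /dg dgz.
  exact: is_derive_val (is_derive_comp_real (is_derive_htime z j) dgz).
have outer j : is_derive y (ej j) (fun z => g' (htime z) * (z ord0 j / N%:R))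
    (g' (htime y) / N%:R + (y ord0 j / N%:R) ^+ 2 * g'' (htime y)).
  apply: is_derive_eq (is_deriveM_fun (is_derive_comp_real (is_derive_htime y j) dg')
    (is_deriveM_fun (is_derive_coord _ _ _) (is_derive_cst_fun _ _ _))) _.
  by rewrite mxE !eqxx /=; field.
under eq_bigr do rewrite (near_eq_derive _ (inner _)) (is_derive_val (outer _)).
rewrite big_split /= sumr_const card_ord -mulr_suml -mulr_natr.
under eq_bigr do rewrite expr_div_n.
by rewrite -mulr_suml sum_sqr_coord; field.
Qed.

Lemma sum_sqr_radial_grad (c : R) (y : 'rV[R]_N) :
  \sum_(j < N) (c * (y ord0 j / N%:R)) ^+ 2 = c ^+ 2 * (2 * htime y) / N%:R.
Proof.
rewrite (eq_bigr (fun j => c ^+ 2 / N%:R ^+ 2 * y ord0 j ^+ 2)) => [|j _]; last by field.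
by rewrite -mulr_sumr sum_sqr_coord; field.
Qed.

End HeatTime.

Section HeatEquation.
Variables (R : realType) (n : nat) (f : 'rV[R]_n -> R -> R).
Hypothesis f_smooth : smooth_pos f.

Local Notation ei i := (delta_mx ord0 i : 'rV[R]_n).

Lemma is_derive_pdx ds i x (t : R) : 0 < t ->
  is_derive x (ei i) (fun z => pdn ds f z t) (pdx (pdn ds f) i x t).
Proof. by move=> t_gt0; have [df _] := f_smooth ds x t_gt0; exact: derivableP (df (Some i)). Qed.

Lemma is_derive_pdt ds x (t : R) : 0 < t ->
  is_derive t 1 (fun s => pdn ds f x s) (pdt (pdn ds f) x t).
Proof. by move=> t_gt0; have [df _] := f_smooth ds x t_gt0; exact: derivableP (df None). Qed.

Definition expNf x t := expR (- f x t).

Lemma expNf_neq0 x t : expNf x t != 0.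
Proof. by rewrite gt_eqF ?expR_gt0. Qed.

Lemma is_derive_expNf_x x (t : R) i : 0 < t ->
  is_derive x (ei i) (fun z => expNf z t) (- pdx f i x t * expNf x t).
Proof.
by move=> t_gt0; have /= dfx := is_derive_pdx [::] i x t_gt0; rewrite /expNf; derive_eq; ring.
Qed.

Lemma is_derive_expNf_t x (t : R) : 0 < t ->
  is_derive t 1 (fun s => expNf x s) (- pdt f x t * expNf x t).
Proof.
by move=> t_gt0; have /= dft := is_derive_pdt [::] x t_gt0; rewrite /expNf; derive_eq; ring.
Qed.

Lemma pdxx_mul_expNf (a : R -> R) x (t : R) i : 0 < t ->
  pdx (pdx (fun z s => a s * expNf z s) i) i x t =
  a t * ((pdx f i x t ^+ 2 - pdx (pdx f i) i x t) * expNf x t).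
Proof.
move=> t_gt0; rewrite {1}/pdx.
have -> : (fun z => pdx (fun z s => a s * expNf z s) i z t) =
          (fun z => a t * (- pdx f i z t * expNf z t)).
  apply/funext => z; apply: is_derive_val.
  by have dW := is_derive_expNf_x z i t_gt0; derive_eq; ring.
apply: is_derive_val.
have dW := is_derive_expNf_x x i t_gt0; have /= dfx := is_derive_pdx [:: Some i] i x t_gt0.
by derive_eq; ring.
Qed.

Lemma heat_eq_expNf x (t : R) : heat_eq f -> 0 < t ->
  \sum_(i < n) (pdx f i x t ^+ 2 - pdx (pdx f i) i x t) = - (n%:R / 2) / t - pdt f x t.
Proof.
move=> heat t_gt0; set c := - (n%:R / 2).
have ut : pdt (ufun f) x t = t `^ c * (- pdt f x t * expNf x t) + expNf x t * (c * t `^ (c - 1)).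
  exact: is_derive_val (is_deriveM_fun (is_derive1_powR c t_gt0) (is_derive_expNf_t x t_gt0)).
have uxx i : pdx (pdx (ufun f) i) i x t =
    t `^ c * ((pdx f i x t ^+ 2 - pdx (pdx f i) i x t) * expNf x t).
  exact (pdxx_mul_expNf (fun s => s `^ c) x i t_gt0).
have := heat x t t_gt0; rewrite ut; under eq_bigr do rewrite uxx.
rewrite -mulr_sumr -mulr_suml powRB ?(gt_eqF t_gt0) ?implybT // powRr1 ?ltW // => E.
have tc_neq0 : t `^ c != 0 by rewrite gt_eqF ?powR_gt0.
apply: (mulIf (expNf_neq0 x t)); apply: (mulfI tc_neq0); rewrite -E.
by field; rewrite gt_eqF.
Qed.

End HeatEquation.

Definition msub2 {R : ringType} (n N : nat) : R := (n + N - 2)%:R.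

Section RadialReduction.
Variables (R : realType) (n : nat) (f : 'rV[R]_n -> R -> R) (N : nat).
Hypothesis f_smooth : smooth_pos f.
Hypothesis heat : heat_eq f.
Hypothesis N_gt0 : (0 < N)%N.
Hypothesis m_gt2 : (2 < n + N)%N.

Local Notation k := (msub2 n N : R).
Local Notation NR := (N%:R : R).
Local Notation ei i := (delta_mx ord0 i : 'rV[R]_n).

(* The nonzero facts below are found by [by] when closing side conditions of [field]. *)
Let NR_gt0 : 0 < NR. Proof. by rewrite ltr0n. Qed.
Let NR_neq0 : NR != 0. Proof. by rewrite gt_eqF. Qed.

Lemma msub2E : k = n%:R + NR - 2.
Proof. by rewrite /msub2 natrB ?natrD // ltnW. Qed.

Let k_neq0 : k != 0. Proof. by rewrite pnatr_eq0 subn_eq0 -ltnNge. Qed.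

(* [(2 N s)^a] is [|y|^(2a)] at [s = htime y]. *)
Definition r2pow (a s : R) := (2 * NR * s) `^ a.

Lemma is_derive_r2pow (a s : R) : 0 < s -> is_derive s 1 (r2pow a) (a / s * r2pow a s).
Proof.
move=> s_gt0; have rho_gt0 : 0 < 2 * NR * s by rewrite !mulr_gt0.
have drho : is_derive s 1 (fun s => 2 * NR * s) (2 * NR).
  by derive_eq; ring.
apply: is_derive_eq (is_derive_comp_real drho (is_derive1_powR a rho_gt0)) _.
rewrite /r2pow powRB ?(gt_eqF rho_gt0) ?implybT // powRr1 ?ltW //.
by field; rewrite gt_eqF.
Qed.

Lemma r2pow_half_sqr (s : R) : 0 < s -> r2pow 2^-1 s ^+ 2 = 2 * NR * s.
Proof.
move=> s_gt0; have rho_gt0 : 0 < 2 * NR * s by rewrite !mulr_gt0.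
by rewrite /r2pow -powR_mulrn ?powR_ge0 // -powRrM mulVf // powRr1 // ltW.
Qed.

Local Notation a := (- (k / 2)).

Definition vrad x s := r2pow a s * expNf f x s.

Lemma vfunE : @vfun R n N f = fun x y => vrad x (htime y).
Proof.
apply/funext => x; apply/funext => y; rewrite /vfun /vrad /r2pow /expNf /htime.
congr (_ * _); have -> : 2 * NR * (enorm y ^+ 2 / (2 * NR)) = enorm y ^+ 2 by field.
rewrite -(powR_mulrn 2 (sqrtr_ge0 _)) -powRrM.
by rewrite (_ : 2%:R * a = - k) ?powR_invn //; field.
Qed.

Definition brad x s := r2pow 2^-1 s * expR (f x s / k).

Lemma bfunE : @bfun R n N f = fun x y => brad x (htime y).
Proof.
apply/funext => x; apply/funext => y; rewrite /bfun /brad.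
have -> : (2 - (n + N)%:R)^-1 = - k^-1 :> R.
  by rewrite msub2E natrD -invrN; congr (_^-1); ring.
rewrite vfunE /vrad powRM ?powR_ge0 ?expR_ge0 // /r2pow -powRrM /expNf -expRM.
by congr (_ `^ _ * expR _); field.
Qed.

Definition vrad_t x s := vrad x s * (a / s - pdt f x s).
Definition vrad_tt x s :=
  vrad x s * ((a / s - pdt f x s) ^+ 2 - a / s ^+ 2 - pdt (pdt f) x s).

Lemma is_derive_vrad x (s : R) : 0 < s -> is_derive s 1 (vrad x) (vrad_t x s).
Proof.
move=> s_gt0; have dr := is_derive_r2pow a s_gt0; have dW := is_derive_expNf_t f_smooth x s_gt0.
by rewrite /vrad_t /vrad; derive_eq; field; rewrite gt_eqF.
Qed.

Lemma is_derive_vrad_t x (s : R) : 0 < s -> is_derive s 1 (vrad_t x) (vrad_tt x s).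
Proof.
move=> s_gt0; have dr := is_derive_r2pow a s_gt0; have dW := is_derive_expNf_t f_smooth x s_gt0.
have dinv := is_deriveV_fun (lt0r_neq0 s_gt0) (is_derive_id s 1).
have /= dft := is_derive_pdt f_smooth [:: None] x s_gt0.
by rewrite /vrad_tt /vrad_t /vrad; derive_eq; field; rewrite gt_eqF.
Qed.

Lemma lap_vfun x (y : 'rV[R]_N) (s := htime y) : 0 < s ->
  lap (@vfun R n N f) x y = vrad x s *
    (- (n%:R / 2) / s - pdt f x s + (a / s - pdt f x s) +
     2 * s / NR * ((a / s - pdt f x s) ^+ 2 - a / s ^+ 2 - pdt (pdt f) x s)).
Proof.
move=> s_gt0; rewrite vfunE /lap.
have xx i : dX (dX (fun x y => vrad x (htime y)) i) i x y =
    r2pow a s * ((pdx f i x s ^+ 2 - pdx (pdx f i) i x s) * expNf f x s).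
  exact (pdxx_mul_expNf f_smooth (r2pow a) x i s_gt0).
under eq_bigr do rewrite xx.
rewrite (laplacian_radial N_gt0 s_gt0 (is_derive_vrad x) (is_derive_vrad_t x s_gt0)).
rewrite -mulr_sumr -mulr_suml heat_eq_expNf // /vrad_t /vrad_tt /vrad -/s.
by field; rewrite gt_eqF.
Qed.

Definition psi_poly x s := 4 * (n%:R - 2) * (s * pdt f x s) +
  4 * (s ^+ 2 * (pdt f x s ^+ 2 - pdt (pdt f) x s)) + n%:R * (n%:R - 2).

Definition psirad x s := expR (2 * f x s / k) * psi_poly x s.

Lemma psifunE x (y : 'rV[R]_N) : 0 < htime y -> psifun f x y = psirad x (htime y).
Proof.
move=> s_gt0; rewrite /psifun lap_vfun // bfunE /brad /psirad /vrad exprMn.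
set s := htime y.
have rho_gt0 : 0 < 2 * NR * s by apply: mulr_gt0 => //; apply: mulr_gt0.
have r2powE : r2pow 2^-1 s ^+ (n + N) * r2pow a s = 2 * NR * s.
  rewrite /r2pow -powR_mulrn ?powR_ge0 // -powRrM -powRD ?(gt_eqF rho_gt0) ?implybT //.
  by rewrite (_ : _ + a = 1) ?powRr1 ?ltW // msub2E natrD; field.
have expE : expR (f x s / k) ^+ (n + N) * expNf f x s = expR (2 * f x s / k).
  by rewrite -expRM_natr /expNf -expRD msub2E natrD; congr expR; field; rewrite -msub2E.
transitivity ((r2pow 2^-1 s ^+ (n + N) * r2pow a s) *
    (expR (f x s / k) ^+ (n + N) * expNf f x s) * (psi_poly x s / (2 * NR * s))).
  set A := r2pow _ _ ^+ _; set B := expR _ ^+ _; rewrite /psi_poly msub2E.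
  by field; rewrite gt_eqF.
by rewrite r2powE expE; field; rewrite gt_eqF.
Qed.

Definition psi_poly_x x s i := 4 * (n%:R - 2) * (s * pdx (pdt f) i x s) +
  4 * (s ^+ 2 * (2 * pdt f x s * pdx (pdt f) i x s - pdx (pdt (pdt f)) i x s)).

Definition psi_poly_t x s := 4 * (n%:R - 2) * (pdt f x s + s * pdt (pdt f) x s) +
  4 * (2 * s * (pdt f x s ^+ 2 - pdt (pdt f) x s) +
       s ^+ 2 * (2 * pdt f x s * pdt (pdt f) x s - pdt (pdt (pdt f)) x s)).

Definition psirad_x x s i :=
  expR (2 * f x s / k) * (2 * pdx f i x s / k * psi_poly x s + psi_poly_x x s i).

Definition psirad_t x s :=
  expR (2 * f x s / k) * (2 * pdt f x s / k * psi_poly x s + psi_poly_t x s).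

Lemma is_derive_psirad_x x (s : R) i : 0 < s ->
  is_derive x (ei i) (fun z => psirad z s) (psirad_x x s i).
Proof.
move=> s_gt0; have /= df := is_derive_pdx f_smooth [::] i x s_gt0.
have /= dft := is_derive_pdx f_smooth [:: None] i x s_gt0.
have /= dftt := is_derive_pdx f_smooth [:: None; None] i x s_gt0.
by rewrite /psirad /psirad_x /psi_poly_x /psi_poly; derive_eq; ring.
Qed.

Lemma is_derive_psirad_t x (s : R) : 0 < s -> is_derive s 1 (psirad x) (psirad_t x s).
Proof.
move=> s_gt0; have /= df := is_derive_pdt f_smooth [::] x s_gt0.
have /= dft := is_derive_pdt f_smooth [:: None] x s_gt0.
have /= dftt := is_derive_pdt f_smooth [:: None; None] x s_gt0.
by rewrite /psirad /psirad_t /psi_poly_t /psi_poly; derive_eq; ring.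
Qed.

Lemma dX_psifun x (y : 'rV[R]_N) i : 0 < htime y ->
  dX (psifun f) i x y = psirad_x x (htime y) i.
Proof.
move=> s_gt0; rewrite /dX; under eq_fun do rewrite psifunE //.
exact: is_derive_val (is_derive_psirad_x x i s_gt0).
Qed.

Lemma dY_psifun x (y : 'rV[R]_N) j : 0 < htime y ->
  dY (psifun f) j x y = psirad_t x (htime y) * (y ord0 j / NR).
Proof.
move=> s_gt0; rewrite /dY (@near_eq_derive _ _ _ _ (fun z => psirad x (htime z))).
  exact/is_derive_val/(is_derive_comp_real (is_derive_htime N_gt0 y j))/is_derive_psirad_t.
by apply: filterS (htime_near_gt0 s_gt0) => z /(psifunE x).
Qed.

Definition brad_t x s := brad x s * (2^-1 / s + pdt f x s / k).

Lemma dX_bfun x (y : 'rV[R]_N) i (s := htime y) : 0 < s ->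
  dX (bfun f) i x y = r2pow 2^-1 s * (expR (f x s / k) * (pdx f i x s / k)).
Proof.
move=> s_gt0; rewrite bfunE /dX /brad; apply: is_derive_val.
by have /= df := is_derive_pdx f_smooth [::] i x s_gt0; derive_eq; ring.
Qed.

Lemma dY_bfun x (y : 'rV[R]_N) j : 0 < htime y ->
  dY (bfun f) j x y = brad_t x (htime y) * (y ord0 j / NR).
Proof.
move=> s_gt0; have /= df := is_derive_pdt f_smooth [::] x s_gt0.
have dr := is_derive_r2pow 2^-1 s_gt0.
have db : is_derive (htime y) 1 (brad x) (brad_t x (htime y)).
  by rewrite /brad_t /brad; derive_eq; field; rewrite (gt_eqF s_gt0) andbT.
by rewrite bfunE /dY; exact: is_derive_val (is_derive_comp_real (is_derive_htime N_gt0 y j) db).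
Qed.

Lemma gradX_psifun x (y : 'rV[R]_N) : 0 < htime y ->
  gradX_norm (psifun f) x y = Num.sqrt (\sum_(i < n) psirad_x x (htime y) i ^+ 2).
Proof. by move=> s_gt0; rewrite /gradX_norm; under eq_bigr do rewrite dX_psifun //. Qed.

Lemma gradY_psifun x (y : 'rV[R]_N) (s := htime y) : 0 < s ->
  gradY_norm (psifun f) x y = Num.sqrt (psirad_t x s ^+ 2 * (2 * s) / NR).
Proof.
move=> s_gt0; rewrite /gradY_norm; under eq_bigr do rewrite dY_psifun //.
by rewrite (sum_sqr_radial_grad N_gt0).
Qed.

Lemma gradY_bfun x (y : 'rV[R]_N) (s := htime y) : 0 < s ->
  gradY_norm (bfun f) x y = Num.sqrt ((expR (f x s / k) * (1 + 2 * s * pdt f x s / k)) ^+ 2).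
Proof.
move=> s_gt0; rewrite /gradY_norm; under eq_bigr do rewrite dY_bfun //.
rewrite (sum_sqr_radial_grad N_gt0) -/s /brad_t /brad !exprMn r2pow_half_sqr //.
by apply: congr1; field; apply/and3P; split => //; rewrite gt_eqF.
Qed.

Lemma gradX_bfun x (y : 'rV[R]_N) (s := htime y) : 0 < s ->
  gradX_norm (bfun f) x y =
  Num.sqrt ((\sum_(i < n) (expR (f x s / k) * pdx f i x s) ^+ 2) * (2 * s * (NR / k) ^+ 2) / NR).
Proof.
move=> s_gt0; rewrite /gradX_norm; under eq_bigr do rewrite dX_bfun //.
rewrite -/s !mulr_suml; apply: congr1; apply: eq_bigr => i _.
by rewrite exprMn r2pow_half_sqr //; field; apply/andP.
Qed.

End RadialReduction.

Lemma sqrt_le_1D (R : realType) (A C : R) : `|A| <= C -> Num.sqrt A <= 1 + C.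
Proof.
move=> AC; have [A_ge0 | A_lt0] := boolP (0 <= A); last first.
  rewrite ltr0_sqrtr; last by rewrite ltNge.
  by rewrite addr_ge0 // (le_trans (normr_ge0 A)).
rewrite ger0_norm // in AC; apply: le_trans (_ : Num.sqrt ((1 + A) ^+ 2) <= _).
  by apply: ler_wsqrtr; nra.
by rewrite sqrtr_sqr ger0_norm; lra.
Qed.

Lemma sqrt_div_le (R : realType) (A C M : R) : 0 < M -> `|A| <= C ->
  Num.sqrt (A / M) <= (1 + C) / Num.sqrt M.
Proof.
move=> M_gt0 AC; have [A_ge0 | A_lt0] := boolP (0 <= A); last first.
  rewrite ltr0_sqrtr; last by rewrite pmulr_llt0 ?invr_gt0 // ltNge.
  by rewrite divr_ge0 ?sqrtr_ge0 // addr_ge0 // (le_trans (normr_ge0 A)).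
rewrite sqrtrM // (sqrtrV (ltW M_gt0)).
by apply: ler_wpM2r; [rewrite invr_ge0 sqrtr_ge0 | exact: sqrt_le_1D].
Qed.

Lemma norm_le_of_sum5 (R : realDomainType) (a1 a2 a3 a4 a5 C : R) :
  `|a1| + `|a2| + `|a3| + `|a4| + `|a5| <= C ->
  [/\ `|a1| <= C, `|a2| <= C, `|a3| <= C, `|a4| <= C & `|a5| <= C].
Proof.
have := normr_ge0 a1; have := normr_ge0 a2; have := normr_ge0 a3.
by have := normr_ge0 a4; have := normr_ge0 a5; move=> *; split; lra.
Qed.

Lemma msub2_ge1 (R : numDomainType) n N : (3 <= N)%N -> 1 <= msub2 n N :> R.
Proof. by move=> N_ge3; rewrite /msub2 ler1n; lia. Qed.

Lemma natr_le_msub2 (R : numDomainType) n N : (3 <= N)%N -> N%:R <= 3 * msub2 n N :> R.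
Proof. by move=> N_ge3; rewrite /msub2 -natrM ler_nat; lia. Qed.

Section UniformBounds.
Variables (R : realType) (n : nat) (f : 'rV[R]_n -> R -> R) (tau1 tau2 : R).

Definition unif_bounded (g : nat -> 'rV[R]_n -> R -> R) := exists C : R,
  forall N x s, (3 <= N)%N -> tau1 <= s <= tau2 -> `|g N x s| <= C.

Lemma unif_bounded_cst (c : R) : unif_bounded (fun _ _ _ => c).
Proof. by exists `|c|. Qed.

Lemma unif_bounded_id : unif_bounded (fun _ _ s => s).
Proof.
exists (`|tau1| + `|tau2|) => N x s _ /andP[t1s st2].
have := ler_norm (- tau1); have := ler_norm tau2; have := normr_ge0 tau1; have := normr_ge0 tau2.
by rewrite normrN ler_norml => *; apply/andP; split; lra.
Qed.

Lemma unif_bounded_add g h : unif_bounded g -> unif_bounded h ->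
  unif_bounded (fun N x s => g N x s + h N x s).
Proof.
move=> [C1 gC1] [C2 hC2]; exists (C1 + C2) => N x s N_ge3 s_in.
by apply: le_trans (ler_normD _ _) _; apply: lerD; [exact: gC1 | exact: hC2].
Qed.

Lemma unif_bounded_opp g : unif_bounded g -> unif_bounded (fun N x s => - g N x s).
Proof. by move=> [C gC]; exists C => N x s N_ge3 s_in; rewrite normrN; apply: gC. Qed.

Lemma unif_bounded_mul g h : unif_bounded g -> unif_bounded h ->
  unif_bounded (fun N x s => g N x s * h N x s).
Proof.
move=> [C1 gC1] [C2 hC2]; exists (C1 * C2) => N x s N_ge3 s_in.
by rewrite normrM; apply: ler_pM => //; [exact: gC1 | exact: hC2].
Qed.

Lemma unif_bounded_expr g k : unif_bounded g -> unif_bounded (fun N x s => g N x s ^+ k).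
Proof.
move=> gb; elim: k => [|k IHk]; first exact: unif_bounded_cst.
by under eq_fun do under eq_fun do under eq_fun do rewrite exprS; exact: unif_bounded_mul.
Qed.

Lemma unif_bounded_norm g : unif_bounded g -> unif_bounded (fun N x s => `|g N x s|).
Proof. by move=> [C gC]; exists C => N x s N_ge3 s_in; rewrite normr_id; apply: gC. Qed.

Lemma unif_bounded_expR g : unif_bounded g -> unif_bounded (fun N x s => expR (g N x s)).
Proof.
move=> [C gC]; exists (expR C) => N x s N_ge3 s_in.
by rewrite ger0_norm ?expR_ge0 // ler_expR (le_trans (ler_norm _) (gC N x s N_ge3 s_in)).
Qed.

Lemma unif_bounded_sum (g : 'I_n -> nat -> 'rV[R]_n -> R -> R) :
  (forall i, unif_bounded (g i)) -> unif_bounded (fun N x s => \sum_(i < n) g i N x s).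
Proof.
move=> /boolp.choice[C gC]; exists (\sum_(i < n) C i) => N x s N_ge3 s_in.
by apply: le_trans (ler_norm_sum _ _ _) _; apply: ler_sum => i _; exact: gC.
Qed.

Lemma unif_bounded_inv_msub2 : unif_bounded (fun N _ _ => (msub2 n N)^-1).
Proof.
exists 1 => N x s N_ge3 _; have k_ge1 := msub2_ge1 R n N_ge3.
have k_gt0 := lt_le_trans ltr01 k_ge1.
by rewrite ger0_norm ?invf_le1 // invr_ge0 ltW.
Qed.

Lemma unif_bounded_natr_div_msub2 : unif_bounded (fun N _ _ => N%:R / msub2 n N).
Proof.
exists 3 => N x s N_ge3 _; have k_gt0 := lt_le_trans ltr01 (msub2_ge1 R n N_ge3).
rewrite ger0_norm; last by rewrite divr_ge0 // ltW.
by rewrite ler_pdivrMr // natr_le_msub2.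
Qed.

Hypothesis f_bounded : bounded_derivs f tau1 tau2.

Lemma unif_bounded_pdn ds : unif_bounded (fun _ x s => pdn ds f x s).
Proof. by have [K fK] := f_bounded ds; exists K => N x s _; apply: fK. Qed.

End UniformBounds.

Ltac pd_path n t := lazymatch t with
  | pdx ?F ?i => let l := pd_path n F in constr:(Some i :: l)
  | pdt ?F => let l := pd_path n F in constr:(None :: l)
  | _ => constr:(@nil (option 'I_n))
  end.

Ltac unif_bounded_tac f_bounded := lazymatch goal with
  | |- unif_bounded _ _ (fun _ _ s => s) => exact: unif_bounded_id
  | |- unif_bounded _ _ (fun N _ _ => N%:R / msub2 _ N) => exact: unif_bounded_natr_div_msub2
  | |- unif_bounded _ _ (fun N _ _ => (msub2 _ N)^-1) => exact: unif_bounded_inv_msub2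
  | |- unif_bounded _ _ (fun _ _ _ => ?c) => exact: unif_bounded_cst
  | |- unif_bounded _ _ (fun _ _ _ => _ + _) =>
      apply: unif_bounded_add; unif_bounded_tac f_bounded
  | |- unif_bounded _ _ (fun _ _ _ => - _) =>
      apply: unif_bounded_opp; unif_bounded_tac f_bounded
  | |- unif_bounded _ _ (fun _ _ _ => _ * _) =>
      apply: unif_bounded_mul; unif_bounded_tac f_bounded
  | |- unif_bounded _ _ (fun _ _ _ => _ ^+ _) =>
      apply: unif_bounded_expr; unif_bounded_tac f_bounded
  | |- unif_bounded _ _ (fun _ _ _ => `|_|) =>
      apply: unif_bounded_norm; unif_bounded_tac f_bounded
  | |- unif_bounded _ _ (fun _ _ _ => expR _) =>
      apply: unif_bounded_expR; unif_bounded_tac f_bounded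
  | |- unif_bounded _ _ (fun _ _ _ => \sum_(i < _) _) =>
      apply: unif_bounded_sum => ?; unif_bounded_tac f_bounded
  | |- @unif_bounded _ ?n _ _ (fun _ x s => ?P x s) =>
      let ds := pd_path n P in exact: (unif_bounded_pdn f_bounded ds)
  end.

Theorem lemma2p5 (R : realType) (n : nat) (f : 'rV[R]_n -> R -> R) (tau1 tau2 : R) :
  (1 <= n)%N ->
  smooth_pos f -> heat_eq f ->
  0 < tau1 -> tau1 < tau2 ->
  bounded_derivs f tau1 tau2 ->
  exists C : R, forall (N : nat), (3 <= N)%N ->
    forall (x : 'rV[R]_n) (y : 'rV[R]_N),
      tau1 <= enorm y ^+ 2 / (2 * N%:R) <= tau2 ->
      [/\ `|@psifun R n N f x y| <= C,
          gradX_norm (@psifun R n N f) x y <= C,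
          gradY_norm (@bfun R n N f) x y <= C,
          gradY_norm (@psifun R n N f) x y <= C / Num.sqrt N%:R &
          gradX_norm (@bfun R n N f) x y <= C / Num.sqrt N%:R].
Proof.
move=> _ f_smooth heat tau1_gt0 _ f_bounded.
have [C HC] : unif_bounded tau1 tau2 (fun N x s =>
    `|psirad f N x s| +
    `|\sum_(i < n) psirad_x f N x s i ^+ 2| +
    `|(expR (f x s / msub2 n N) * (1 + 2 * s * pdt f x s / msub2 n N)) ^+ 2| +
    `|psirad_t f N x s ^+ 2 * (2 * s)| +
    `|(\sum_(i < n) (expR (f x s / msub2 n N) * pdx f i x s) ^+ 2) *
      (2 * s * (N%:R / msub2 n N) ^+ 2)|).
  rewrite /psirad /psirad_x /psirad_t /psi_poly_x /psi_poly_t /psi_poly.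
  unif_bounded_tac f_bounded.
exists (1 + C) => N N_ge3 x y s_range.
have s_gt0 : 0 < htime y := lt_le_trans tau1_gt0 (andP s_range).1.
have [N_gt0 m_gt2] : (0 < N)%N /\ (2 < n + N)%N by split; lia.
have NR_gt0 : 0 < N%:R :> R by rewrite ltr0n.
have [b1 b2 b3 b4 b5] := norm_le_of_sum5 (le_trans (ler_norm _) (HC N x _ N_ge3 s_range)).
split.
- by rewrite (psifunE f_smooth heat N_gt0 m_gt2 x s_gt0); lra.
- by rewrite (gradX_psifun f_smooth heat N_gt0 m_gt2 x s_gt0); exact: sqrt_le_1D.
- by rewrite (gradY_bfun f_smooth N_gt0 m_gt2 x s_gt0); exact: sqrt_le_1D.
- by rewrite (gradY_psifun f_smooth heat N_gt0 m_gt2 x s_gt0); exact: sqrt_div_le.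
- by rewrite (gradX_bfun f_smooth N_gt0 m_gt2 x s_gt0); exact: sqrt_div_le.
Qed.
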